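(* Let $r\ge 3$, $k\ge 2r+13$, $m=\lfloor (k-1)/2\rfloor$, $f(n)=\binom{m}{r-1}(n-m)+\binom{m}{r}+\mathbb{1}_{2\mid k}\binom{m}{r-2}$, and $$N_{k,r}=\binom{r(k-1)}{r}+\binom{m}{r-1}m-\binom{m}{r}-\mathbb{1}_{2\mid k}\binom{m}{r-2}+r(k-1).$$ Let $n>N_{k,r}$ and let $\mathcal H$ be an $n$-vertex $r$-graph with no Berge-path of length $k$ and with at least $f(n)$ hyperedges. Let $\mathcal H'$ be obtained from $\mathcal H$ by repeatedly deleting a vertex whose degree in the current hypergraph is less than $\binom{m}{r-1}$, together with all hyperedges containing it, until no such vertex remains. Then $\mathcal H'$ has at least $r(k-1)$ vertices and minimum degree at least $\binom{m}{r-1}$.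
   Context: An $r$-graph is a simple $r$-uniform hypergraph; the degree of a vertex is the number of hyperedges containing it. A Berge-path of length $t$ is an alternating sequence $v_1,e_1,\dots,e_t,v_{t+1}$ of $t+1$ distinct vertices and $t$ distinct hyperedges with $\{v_i,v_{i+1}\}\subseteq e_i$. $\mathbb{1}_{2\mid k}$ is $1$ if $k$ is even and $0$ otherwise. *)

From mathcomp Require Import all_boot.
Set Implicit Arguments. Unset Strict Implicit. Unset Printing Implicit Defensive.

(* An r-graph on vertex type T: a set E of hyperedges (subsets of T), each of size r.
   Simplicity (no repeated hyperedges) is automatic since E is a set. *)
Definition is_rgraph (T : finType) (r : nat) (E : {set {set T}}) : Prop :=
  forall e, e \in E -> #|e| = r.

Definition hdeg (T : finType) (E : {set {set T}}) (v : T) : nat :=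
  #|[set e in E | v \in e]|.

(* Berge-path of length t given by vertices vs = [v_0; ...; v_t] (distinct) and
   hyperedges es = [e_0; ...; e_{t-1}] (distinct, in E) with {v_i, v_{i+1}} ⊆ e_i.
   (All indices used are in range, so the default x0 of nth is irrelevant.) *)
Definition berge_path (T : finType) (E : {set {set T}}) (t : nat)
    (vs : seq T) (es : seq {set T}) : Prop :=
  [/\ size vs = t.+1, size es = t, uniq vs && uniq es,
      all (fun e => e \in E) es &
      forall (x0 : T) (i : nat), i < t ->
        (nth x0 vs i \in nth set0 es i) && (nth x0 vs i.+1 \in nth set0 es i)].

Definition has_berge_path (T : finType) (E : {set {set T}}) (t : nat) : Prop :=
  exists vs es, berge_path E t vs es.

Definition peel_step (T : finType) (d : nat)
    (H H' : {set T} * {set {set T}}) : Prop :=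
  exists2 v, v \in H.1 &
    [/\ hdeg H.2 v < d,
        H'.1 = H.1 :\ v &
        H'.2 = [set e in H.2 | v \notin e]].

Inductive peels (T : finType) (d : nat) :
    {set T} * {set {set T}} -> {set T} * {set {set T}} -> Prop :=
  | peels_refl H : peels d H H
  | peels_step H H1 H2 : peel_step d H H1 -> peels d H1 H2 -> peels d H H2.

Definition peel_result (T : finType) (d : nat)
    (H H' : {set T} * {set {set T}}) : Prop :=
  peels d H H' /\ (forall v, v \in H'.1 -> ~~ (hdeg H'.2 v < d)).

(* Each deletion removes one vertex and fewer than d := C(m, r-1) hyperedges.
   If the process stopped with fewer than L := r(k-1) vertices, the surviving
   r-graph would have at most C(L, r) hyperedges, so H itself would have at
   most C(L, r) + (d-1) n hyperedges; for n > N_{k,r} this is less than f(n). *)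

From mathcomp Require Import all_boot.
From mathcomp Require Import zify.

Set Implicit Arguments.
Unset Strict Implicit.
Unset Printing Implicit Defensive.

Definition edges_within (T : finType) (H : {set T} * {set {set T}}) : Prop :=
  forall e, e \in H.2 -> e \subset H.1.

Section Peeling.

Variables (T : finType) (d : nat).
Implicit Types H : {set T} * {set {set T}}.

Lemma peel_step_subset H H' : peel_step d H H' -> H'.2 \subset H.2.
Proof. by case=> v _ [_ _ ->]; apply/subsetP => e; rewrite inE => /andP []. Qed.

Lemma peel_step_within H H' :
  peel_step d H H' -> edges_within H -> edges_within H'.
Proof.
case=> v _ [_ V' E'] sub e; rewrite E' inE => /andP [eE ve].
apply/subsetP => x xe; rewrite V' !inE (subsetP (sub e eE)) // andbT.
by apply: contraNneq ve => <-.
Qed.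

Lemma card_peel_step H H' :
  peel_step d H H' -> #|H.2| + d.-1 * #|H'.1| <= #|H'.2| + d.-1 * #|H.1|.
Proof.
case=> v vH [small -> ->].
have -> : #|H.2| = #|[set e in H.2 | v \notin e]| + hdeg H.2 v.
  rewrite /hdeg -(cardsID [set e : {set T} | v \in e] H.2) addnC.
  by congr (_ + _); apply: eq_card => e; rewrite !inE andbC.
rewrite [#|H.1|](cardsD1 v) vH mulnS.
have : hdeg H.2 v <= d.-1 by move: small; case: (d).
lia.
Qed.

Lemma peels_subset H H' : peels d H H' -> H'.2 \subset H.2.
Proof.
elim=> [//|H1 H2 H3 /peel_step_subset s12 _ s23].
exact: subset_trans s23 s12.
Qed.

Lemma peels_within H H' : peels d H H' -> edges_within H -> edges_within H'.
Proof. by elim=> [//|H1 H2 H3 /peel_step_within w12 _ w23] /w12. Qed.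

Lemma card_peels H H' :
  peels d H H' -> #|H.2| + d.-1 * #|H'.1| <= #|H'.2| + d.-1 * #|H.1|.
Proof. elim=> [//|H1 H2 H3 /card_peel_step c12 _ c23]; lia. Qed.

End Peeling.

Lemma card_rgraph_within (T : finType) (r : nat) (V : {set T})
    (E : {set {set T}}) :
  is_rgraph r E -> edges_within (V, E) -> #|E| <= 'C(#|V|, r).
Proof.
move=> rE within; rewrite -cards_draws; apply: subset_leq_card.
by apply/subsetP => e eE; rewrite inE within //= rE.
Qed.

Lemma bin_add_leq_binSS (m r : nat) :
  1 < r -> 'C(m, r) + 'C(m, r - 2) <= 'C(m.+2, r).
Proof. by case: r => [|[|r]] // _; rewrite !binS subn2 /=; lia. Qed.

Lemma card_peeled_rgraph (T : finType) (r d L : nat) (E : {set {set T}})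
    (V' : {set T}) (E' : {set {set T}}) :
  is_rgraph r E -> peels d ([set: T], E) (V', E') -> #|V'| <= L ->
  #|E| + d.-1 * #|V'| <= 'C(L, r) + d.-1 * #|T|.
Proof.
move=> rE hp small.
have rE' e : e \in E' -> #|e| = r by move=> /(subsetP (peels_subset hp)) /rE.
have within := peels_within hp (fun e _ => subsetT e).
have := card_peels hp; rewrite /= cardsT => cE.
apply: leq_trans cE _; rewrite leq_add2r.
exact: leq_trans (card_rgraph_within rE' within) (leq_bin2l _ small).
Qed.

Theorem mainTheorem3 (r k : nat) (T : finType) (E : {set {set T}})
    (V' : {set T}) (E' : {set {set T}}) :
  3 <= r ->
  2 * r + 13 <= k ->
  let m := (k.-1)./2 in
  let ind := (~~ odd k : nat) in
  let n := #|T| in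
  ('C(r * k.-1, r) + 'C(m, r.-1) * m + r * k.-1 - 'C(m, r) - ind * 'C(m, r - 2)
     < n) ->
  is_rgraph r E ->
  ~ has_berge_path E k ->
  'C(m, r.-1) * (n - m) + 'C(m, r) + ind * 'C(m, r - 2) <= #|E| ->
  peel_result 'C(m, r.-1) ([set: T], E) (V', E') ->
  r * k.-1 <= #|V'| /\ (forall v, v \in V' -> 'C(m, r.-1) <= hdeg E' v).
Proof.
move=> hr hk m ind n hn rE _ hE [hp hmin].
split; last by move=> v /hmin; rewrite -leqNgt.
rewrite leqNgt; apply/negP => /ltnW small.
have cE := card_peeled_rgraph rE hp small; rewrite -/n in cE.
have hm : m.+2 <= r * k.-1.
  by rewrite /m -divn2; have := leq_div k.-1 2; nia.
(* So the truncated subtractions in the bound on [n] are exact. *)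
have hX : 'C(m, r) + ind * 'C(m, r - 2) <= 'C(r * k.-1, r).
  apply: leq_trans (leq_trans (bin_add_leq_binSS m (ltnW hr)) (leq_bin2l _ hm)).
  by rewrite leq_add2l /ind; case: (~~ odd k); rewrite ?mul1n ?mul0n.
set d := 'C(m, r.-1) in hn hE cE.
have hd : 0 < d by rewrite bin_gt0 /m; lia.
have hmn : m <= n by apply: leq_trans (leq_pmull m hd) _; lia.
have hdmn : d * m <= d * n by rewrite leq_mul2l hmn orbT.
have hdn : d.-1 * n + n = d * n by rewrite addnC -mulSn prednK.
rewrite mulnBr in hE; lia.
Qed.
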